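(* For all integers $a,b,l\ge0$, $$\sum_{\tau\in P(a,b)}(-1)^{|\hat\tau|}\,s_{(\tau+l-b)\cup(\hat\tau+l)}=\binom{a+b}{a}\,s_{(l^{a+b})}\quad\text{in }\operatorname{Sym}_{a+b},$$ where $\tau+l-b=(\tau_1+l-b,\dots,\tau_a+l-b)\in\mathbb Z^a$ and $\hat\tau+l=(\hat\tau_1+l,\dots,\hat\tau_b+l)\in\mathbb Z^b$. Equivalently, in terms of the wedge product, $\sum_{\tau\in P(a,b)}(-1)^{|\hat\tau|}\wedge_{a,b}(s_{l^a}s_\tau, s_{\hat\tau}s_{l^b})=\binom{a+b}{a}s_{(l^{a+b})}$.
   Context: $\operatorname{Sym}_k=\mathbb Z[x_1,\dots,x_k]^{S_k}$. $P(a,b)$ is the set of partitions $\lambda=(\lambda_1\ge\dots\ge\lambda_a\ge0)$ with at most $a$ parts and $\lambda_1\le b$; $|\lambda|=\sum\lambda_i$. For $\lambda\in P(a,b)$, the complementary partition is $\lambda^c=(b-\lambda_a,\dots,b-\lambda_1)$, the conjugate $\lambda^t$ has $\lambda^t_j=\#\{i:\lambda_i\ge j\}$, and $\hat\lambda=(\lambda^c)^t\in P(b,a)$ (regarded as a length-$b$ sequence padded with zeros). $(l^k)$ denotes $(l,\dots,l)$ ($k$ entries). For $\mu\in\mathbb Z^k$ with $\mu_j\ge j-k$, $s_\mu=\det(x_i^{\mu_j+k-j})_{1\le i,j\le k}/\det(x_i^{k-j})_{1\le i,j\le k}$; for $\lambda\in\mathbb Z^a,\mu\in\mathbb Z^b$,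 $\lambda\cup\mu=(\lambda_1,\dots,\lambda_a,\mu_1,\dots,\mu_b)$. The wedge product is $\wedge_{a,b}(s_\lambda,s_\mu)=s_{(\lambda-b)\cup\mu}$ for $\lambda\in P(a)$, $\mu\in P(b)$, extended bilinearly. *)

From HB Require Import structures.
From mathcomp Require Import all_boot all_order all_algebra.
Unset Strict Implicit. Unset Printing Implicit Defensive.
Import Order.TTheory GRing.Theory Num.Theory.
Local Open Scope ring_scope.

(* Polynomial ring Z[x_0,...,x_{k-1}] as an iterated univariate polynomial ring. *)
Fixpoint MP (k : nat) : idomainType :=
  match k with
  | 0 => int
  | k'.+1 => ({poly MP k'} : idomainType)
  end.

(* The variable x_i of Z[x_0,...,x_{k-1}] (meaningful for i < k). *)
Fixpoint mvar (k : nat) : nat -> MP k :=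
  match k return nat -> MP k with
  | 0 => fun _ => 0
  | k'.+1 => fun i => if i == k' then ('X : {poly MP k'}) else (mvar k' i)%:P
  end.

(* Fraction field of Z[x_0,...,x_{k-1}], where the ratio of determinants lives. *)
Definition FF (k : nat) : fieldType := {fraction MP k}.

Definition fvar (k : nat) (i : 'I_k) : FF k := tofrac (mvar k i).

(* s_mu = det(x_i^(mu_j + k - j)) / det(x_i^(k - j)),  (0-indexed: k-1-j). *)
Definition schur (k : nat) (mu : 'I_k -> int) : FF k :=
  \det (\matrix_(i < k, j < k) fvar k i ^ (mu j + (k.-1 - j)%N%:Z))
  / \det (\matrix_(i < k, j < k) fvar k i ^+ (k.-1 - j)).

(* P(a,b): partitions with at most a parts and parts <= b, as nonincreasing
   functions 'I_a -> 'I_b.+1. *)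
Definition inP (a b : nat) (t : {ffun 'I_a -> 'I_b.+1}) : bool :=
  [forall i : 'I_a, forall j : 'I_a, (i <= j)%N ==> (t j <= t i)%N].

Definition pcompl (a b : nat) (t : 'I_a -> nat) : 'I_a -> nat :=
  fun i => (b - t (rev_ord i))%N.

Definition pconj (a m : nat) (t : 'I_a -> nat) : 'I_m -> nat :=
  fun j => #|[pred i : 'I_a | (j.+1 <= t i)%N]|.

Definition phat (a b : nat) (t : 'I_a -> nat) : 'I_b -> nat :=
  pconj a b (pcompl a b t).

Definition psize (n : nat) (t : 'I_n -> nat) : nat := (\sum_(i < n) t i)%N.

Definition wedge_index (a b l : nat) (t : 'I_a -> nat) : 'I_(a + b) -> int :=
  fun i => match split i with
           | inl i' => (t i' + l)%N%:Z - b%:Z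
           | inr j => (phat a b t j + l)%N%:Z
           end.

From mathcomp Require Import all_boot all_order all_algebra all_fingroup.
From mathcomp Require Import zify.
Import Order.TTheory GRing.Theory Num.Theory.

(* Add the staircase a + b - 1 - j to the entries of (tau + l - b) \cup (hat tau + l)
   and remove l: this gives the numbers tau_i + a - 1 - i (i < a) and
   hat tau_k + b - 1 - k (k < b), which by the classical complementarity between a
   partition in an a x b box and the conjugate of its complement are 0, ..., a + b - 1,
   each exactly once.  So every numerator determinant is the numerator of
   s_(l^(a+b)) with its columns permuted.  The inversions of the permutation are the
   pairs (i, k) with tau_i + k < b, and for fixed k there are hat tau_k of them, so the
   sign is (-1)^|hat tau| and cancels.  Each of the C(a + b, a) summands is therefore
   s_(l^(a+b)). *)

Section ColumnPermutation.

Local Open Scope ring_scope.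

Lemma sign_perm_sgz n (s : 'S_n) :
  (-1) ^+ s = \prod_(i < n) \prod_(j < n | (i < j)%N) sgz ((s j)%:Z - (s i)%:Z) :> int.
Proof.
pose V (f : 'I_n -> nat) := Vandermonde n (\row_j (f j)%:Z).
have detV f : \det (V f) = \prod_(i < n) \prod_(j < n | (i < j)%N) ((f j)%:Z - (f i)%:Z).
  by rewrite det_Vandermonde; apply: eq_bigr => i _; apply: eq_bigr => j _; rewrite !mxE.
have detV_gt0 : 0 < \det (V id).
  rewrite detV; apply: prodr_gt0 => i _; apply: prodr_gt0 => j lt_ij.
  by rewrite subr_gt0 ltz_nat.
have : \det (V (fun j => s j)) = (-1) ^+ s * \det (V id).
  have -> : V (fun j => s j) = col_perm s (V id) by apply/matrixP => i j; rewrite !mxE.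
  by rewrite col_permE det_mulmx det_perm odd_permV mulrC.
have sgz_prod I r P (F : I -> int) :
    sgz (\prod_(i <- r | P i) F i) = \prod_(i <- r | P i) sgz (F i).
  exact: (big_morph _ (@sgzM _) (sgz1 _)).
move/(congr1 (@sgz _)); rewrite sgzM (gtr0_sgz detV_gt0) mulr1 detV sgz_prod => sgz_sign.
have -> : (-1) ^+ s = sgz ((-1) ^+ s : int) by case: odd_perm; rewrite ?sgzN sgz1.
by rewrite -sgz_sign; apply: eq_bigr => i _; rewrite sgz_prod.
Qed.

Lemma det_reindex_cols (R : comNzRingType) n (M : 'M[R]_n) (e : 'I_n -> 'I_n) :
  injective e ->
  \det (\matrix_(i, j) M i (e j))
    = (\prod_(i < n) \prod_(j < n | (i < j)%N) sgz ((e j)%:Z - (e i)%:Z))%:~R * \det M.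
Proof.
move=> e_inj; pose s := perm e_inj.
have -> : \matrix_(i, j) M i (e j) = col_perm s M by apply/matrixP => i j; rewrite !mxE permE.
rewrite col_permE det_mulmx det_perm odd_permV mulrC.
have -> : \prod_(i < n) \prod_(j < n | (i < j)%N) sgz ((e j)%:Z - (e i)%:Z) = (-1) ^+ s.
  by rewrite sign_perm_sgz; apply: eq_bigr => i _; apply: eq_bigr => j _; rewrite !permE.
by rewrite rmorph_sign.
Qed.

End ColumnPermutation.

Lemma sorted_leq_tnth n m (u : n.-tuple 'I_m) :
  sorted leq (map val u)
  = [forall i : 'I_n, forall j : 'I_n, (i <= j) ==> (tnth u i <= tnth u j)].
Proof.
have nthE (i : 'I_n) : nth 0 (map val u) i = tnth u i.
  by rewrite (nth_map (tnth u i)) ?size_tuple // -tnth_nth.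
apply/idP/forallP => [srt i|le_u].
  apply/forallP => j; apply/implyP => le_ij; rewrite -!nthE.
  by apply: (sorted_leq_nth leq_trans leqnn) => //; rewrite inE size_map size_tuple.
apply/(sortedP 0) => k; rewrite size_map size_tuple => lt_k1n.
have := le_u (Ordinal (ltnW lt_k1n)) => /forallP /(_ (Ordinal lt_k1n)) /implyP.
by rewrite -!nthE; apply.
Qed.

Lemma card_inP a b : #|[pred t : {ffun 'I_a -> 'I_b.+1} | inP a b t]| = 'C(a + b, a).
Proof.
rewrite -card_sorted_tuples.
pose rev_ffun (u : a.-tuple 'I_b.+1) := [ffun i => tnth u (rev_ord i)].
have rev_ffun_inj : injective rev_ffun.
  move=> u v /ffunP eq_uv; apply: eq_from_tnth => i.
  by have := eq_uv (rev_ord i); rewrite !ffunE rev_ordK.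
have inP_rev_ffun u : inP a b (rev_ffun u) = sorted leq (map val u).
  rewrite sorted_leq_tnth; apply/forallP/forallP => le_u i; apply/forallP => j.
    by have /forallP/(_ (rev_ord i)) := le_u (rev_ord j); rewrite !ffunE !rev_ordK /=; lia.
  by have /forallP/(_ (rev_ord i)) := le_u (rev_ord j); rewrite !ffunE /=; lia.
rewrite -(card_imset _ rev_ffun_inj); apply: eq_card => t; rewrite !inE.
apply/idP/imsetP => [t_inP|[u]]; last by rewrite inE -inP_rev_ffun => ? ->.
have rev_ffunK : rev_ffun [tuple t (rev_ord i) | i < a] = t.
  by apply/ffunP => i; rewrite ffunE tnth_mktuple rev_ordK.
by exists [tuple t (rev_ord i) | i < a]; rewrite // inE -inP_rev_ffun rev_ffunK.
Qed.

Lemma card_ord_ltn a m : m <= a -> #|[pred j : 'I_a | j < m]| = m.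
Proof.
move=> le_ma; have widen_inj : injective (widen_ord le_ma).
  by move=> x y /(congr1 val) /= /val_inj.
rewrite -[RHS](card_ord m) -(card_image widen_inj); apply: eq_card => j.
rewrite inE; apply/idP/imageP => [lt_jm|[k _ ->]]; last by rewrite /= ltn_ord.
by exists (Ordinal lt_jm) => //; apply: val_inj.
Qed.
Arguments card_ord_ltn {a m}.

Section WedgeExponents.

Variables (a b : nat) (t : 'I_a -> nat).
Hypothesis t_noninc : forall {i j : 'I_a}, i <= j -> t j <= t i.
Hypothesis t_le_b : forall i, t i <= b.

Definition cnt_le v := #|[pred i : 'I_a | t i <= v]|.

Lemma cnt_le_sum v : cnt_le v = \sum_(i < a) (t i <= v).
Proof.
rewrite /cnt_le -sum1_card big_mkcond.
by apply: eq_bigr => i _; rewrite inE; case: leqP.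
Qed.

Lemma cnt_le_max v : cnt_le v <= a.
Proof. by rewrite -[leqRHS](card_ord a) max_card. Qed.

Lemma cnt_le_homo : {homo cnt_le : v w / v <= w}.
Proof.
move=> v w le_vw; apply/subset_leq_card/subsetP => i.
by rewrite !inE => /leq_trans->.
Qed.

Lemma phatE (j : 'I_b) : phat a b t j = cnt_le (b - j.+1).
Proof.
rewrite /phat /pconj /pcompl /cnt_le -!sum1_card (reindex_inj rev_ord_inj) /=.
by apply: eq_bigl => i; rewrite !inE rev_ordK; have := ltn_ord j; lia.
Qed.

Lemma cnt_le_lb {i : 'I_a} {v} : t i <= v -> a - i <= cnt_le v.
Proof.
move=> le_tv; have : cnt_le v + #|[predC [pred j | t j <= v]]| = a.
  by rewrite /cnt_le cardC card_ord.
suff : #|[predC [pred j | t j <= v]]| <= i by lia.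
rewrite -(card_ord_ltn (ltnW (ltn_ord i))); apply/subset_leq_card/subsetP => j.
rewrite !inE ltnNge; apply: contra => le_ij; exact: leq_trans (t_noninc le_ij) le_tv.
Qed.

Lemma cnt_le_ub {i : 'I_a} {v} : v < t i -> cnt_le v <= a - i.+1.
Proof.
move=> lt_vt; have : i.+1 + #|[predC [pred j : 'I_a | j < i.+1]]| = a.
  by rewrite -{1}(card_ord_ltn (ltn_ord i)) cardC card_ord.
suff : cnt_le v <= #|[predC [pred j : 'I_a | j < i.+1]]| by lia.
apply/subset_leq_card/subsetP => j; rewrite !inE ltnS.
by apply: contraTN => le_ji; rewrite -ltnNge; exact: leq_trans lt_vt (t_noninc le_ji).
Qed.

Definition wedge_exp (j : 'I_(a + b)) : nat :=
  match split j with
  | inl i => t i + (a - i.+1)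
  | inr k => cnt_le (b - k.+1) + (b - k.+1)
  end.

Lemma wedge_exp_lshift i : wedge_exp (lshift b i) = t i + (a - i.+1).
Proof. by rewrite /wedge_exp (unsplitK (inl _ i)). Qed.

Lemma wedge_exp_rshift k : wedge_exp (rshift a k) = cnt_le (b - k.+1) + (b - k.+1).
Proof. by rewrite /wedge_exp (unsplitK (inr _ k)). Qed.

Lemma wedge_exp_lt j : wedge_exp j < a + b.
Proof.
rewrite /wedge_exp; case: splitP => k _; first by have := t_le_b k; have := ltn_ord k; lia.
by have := cnt_le_max (b - k.+1); have := ltn_ord k; lia.
Qed.

Lemma wedge_exp_lshift_decr {i i' : 'I_a} :
  i < i' -> wedge_exp (lshift b i') < wedge_exp (lshift b i).
Proof.
move=> lt_ii'; rewrite !wedge_exp_lshift.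
by have := t_noninc (ltnW lt_ii'); have := ltn_ord i'; lia.
Qed.

Lemma wedge_exp_rshift_decr {k k' : 'I_b} :
  k < k' -> wedge_exp (rshift a k') < wedge_exp (rshift a k).
Proof.
move=> lt_kk'; rewrite !wedge_exp_rshift.
have /cnt_le_homo : b - k'.+1 <= b - k.+1 by lia.
by have := ltn_ord k'; lia.
Qed.

Lemma wedge_exp_lshift_rshift (i : 'I_a) (k : 'I_b) :
  if t i <= b - k.+1 then wedge_exp (lshift b i) < wedge_exp (rshift a k)
  else wedge_exp (rshift a k) < wedge_exp (lshift b i).
Proof.
rewrite wedge_exp_lshift wedge_exp_rshift.
case: (leqP (t i) (b - k.+1)) => [le_tv|lt_vt].
  by have := cnt_le_lb le_tv; have := ltn_ord i; lia.
by have := cnt_le_ub lt_vt; have := ltn_ord i; lia.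
Qed.

Lemma wedge_exp_inj : injective wedge_exp.
Proof.
suff neq (j j' : 'I_(a + b)) : j < j' -> wedge_exp j != wedge_exp j'.
  move=> j j' eq_e; apply: ord_inj; case: (ltngtP j j') => // [lt_jj'|lt_j'j].
    by have := neq _ _ lt_jj'; rewrite eq_e eqxx.
  by have := neq _ _ lt_j'j; rewrite eq_e eqxx.
rewrite -(splitK j) -(splitK j').
case: (split j) => [i|k]; case: (split j') => [i'|k'] /= lt_jj'.
- by rewrite gtn_eqF // wedge_exp_lshift_decr.
- have := wedge_exp_lshift_rshift i k'; case: ifP => _ lt_e; first by rewrite ltn_eqF.
  by rewrite gtn_eqF.
- by have := ltn_ord i'; lia.
- by rewrite gtn_eqF // wedge_exp_rshift_decr //; lia.
Qed.

Lemma wedge_indexE l j :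
  (wedge_index a b l t j + ((a + b).-1 - j)%N%:Z = (l + wedge_exp j)%N%:Z)%R.
Proof.
rewrite /wedge_index /wedge_exp; case: splitP => k ->.
  by have := t_le_b k; have := ltn_ord k; lia.
by rewrite phatE; have := ltn_ord k; lia.
Qed.

Local Open Scope ring_scope.

Lemma wedge_exp_inversions :
  \prod_(j < a + b) \prod_(j' < a + b | (j < j')%N)
      sgz ((wedge_exp j)%:Z - (wedge_exp j')%:Z)
    = (-1) ^+ psize b (phat a b t) :> int.
Proof.
have sgz_ll (i : 'I_a) : \prod_(i' < a | (i < i')%N)
    sgz ((wedge_exp (lshift b i))%:Z - (wedge_exp (lshift b i'))%:Z) = 1.
  by apply: big1 => i' lt_ii'; rewrite gtr0_sgz // subr_gt0 ltz_nat wedge_exp_lshift_decr.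
have sgz_lr (i : 'I_a) : \prod_(k < b | (i < a + k)%N)
    sgz ((wedge_exp (lshift b i))%:Z - (wedge_exp (rshift a k))%:Z)
    = (-1) ^+ (\sum_(k < b) (t i <= b - k.+1))%N.
  rewrite -prodrXr [LHS](eq_bigl xpredT) => [|k]; last by have := ltn_ord i; lia.
  apply: eq_bigr => k _; have := wedge_exp_lshift_rshift i k.
  case: (leqP (t i) (b - k.+1)) => _ lt_e; first by rewrite ltr0_sgz // subr_lt0 ltz_nat.
  by rewrite gtr0_sgz // subr_gt0 ltz_nat.
have sgz_rl (k : 'I_b) : \prod_(i < a | (a + k < i)%N)
    sgz ((wedge_exp (rshift a k))%:Z - (wedge_exp (lshift b i))%:Z) = 1.
  by apply: big1 => i /=; have := ltn_ord i; lia.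
have sgz_rr (k : 'I_b) : \prod_(k' < b | (a + k < a + k')%N)
    sgz ((wedge_exp (rshift a k))%:Z - (wedge_exp (rshift a k'))%:Z) = 1.
  apply: big1 => k' /= lt_kk'; rewrite gtr0_sgz // subr_gt0 ltz_nat.
  by apply: wedge_exp_rshift_decr; rewrite -(ltn_add2l a).
rewrite big_split_ord /=.
under eq_bigr => i _ do rewrite big_split_ord /= sgz_ll sgz_lr mul1r.
under [X in _ * X]eq_bigr => k _ do rewrite big_split_ord /= sgz_rl sgz_rr mulr1.
rewrite big1_eq mulr1 prodrXr /psize exchange_big /=; congr (_ ^+ _).
by apply: eq_bigr => k _; rewrite phatE cnt_le_sum.
Qed.

Lemma det_wedge_index l :
  (-1) ^+ psize b (phat a b t)
    * \det (\matrix_(i, j) fvar (a + b) i ^ (wedge_index a b l t j + ((a + b).-1 - j)%N%:Z))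
  = \det (\matrix_(i, j) fvar (a + b) i ^ (l%:Z + ((a + b).-1 - j)%N%:Z)).
Proof.
pose M : 'M_(a + b) := \matrix_(i, j) fvar (a + b) i ^ (l%:Z + ((a + b).-1 - j)%N%:Z).
pose e j : 'I_(a + b) := rev_ord (Ordinal (wedge_exp_lt j)).
have e_inj : injective e by move=> j j' /rev_ord_inj/(congr1 val)/wedge_exp_inj.
have -> : \matrix_(i, j) fvar (a + b) i ^ (wedge_index a b l t j + ((a + b).-1 - j)%N%:Z)
    = \matrix_(i, j) M i (e j).
  apply/matrixP => i j; rewrite !mxE wedge_indexE; congr (_ ^ _).
  by rewrite /e /=; have := wedge_exp_lt j; lia.
rewrite det_reindex_cols // -[RHS](signrMK (psize b (phat a b t))); congr (_ * (_ * _)).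
have -> : \prod_(j < a + b) \prod_(j' < a + b | (j < j')%N) sgz ((e j')%:Z - (e j)%:Z)
    = (-1) ^+ psize b (phat a b t) :> int.
  rewrite -wedge_exp_inversions; apply: eq_bigr => j _; apply: eq_bigr => j' _.
  by congr sgz; rewrite /e /=; have := wedge_exp_lt j; have := wedge_exp_lt j'; lia.
by rewrite rmorph_sign.
Qed.

End WedgeExponents.

Local Open Scope ring_scope.

Theorem mainTheorem13 (a b l : nat) :
  \sum_(t : {ffun 'I_a -> 'I_b.+1} | inP a b t)
      (-1) ^+ psize b (phat a b (fun i => nat_of_ord (t i)))
      * schur (a + b) (wedge_index a b l (fun i => nat_of_ord (t i)))
  = 'C(a + b, a)%:R * schur (a + b) (fun _ : 'I_(a + b) => l%:Z).
Proof.
have summandE (t : {ffun 'I_a -> 'I_b.+1}) : inP a b t ->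
    (-1) ^+ psize b (phat a b (fun i => nat_of_ord (t i)))
      * schur (a + b) (wedge_index a b l (fun i => nat_of_ord (t i)))
    = schur (a + b) (fun _ => l%:Z).
  move=> /forallP t_noninc; rewrite /schur mulrA det_wedge_index // => [i j le_ij|i].
    by have /forallP/(_ j)/implyP := t_noninc i; apply.
  by rewrite -ltnS.
rewrite (eq_bigr _ summandE) (eq_bigl [in [pred t | inP a b t]]) //.
by rewrite sumr_const card_inP mulr_natl.
Qed.
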